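(* Let $G=(V,E)$ be a graph, let $K$ be a positive integer, and let $P$ be the output of the port-based randomized greedy procedure (Algorithm 2) described in the context, run on $G$ with parameter $K$. Then $$\tfrac12\rho(G)\le\mathbb{E}|P|\le\left(1+\tfrac{2}{K}\right)\rho(G),$$ where the expectation is over the random permutation used by the procedure.
   Context: $\rho(G)$ is the maximum number of edges in a path cover of $G$ (a collection of vertex-disjoint simple paths). Procedure (Algorithm 2): each vertex $w$ has two ports $w^0,w^1$. Build a graph $H$ whose vertices are, for every edge $(u,v)\in E$, $K+2$ vertices: one corresponding to $(u,v)$ occupying $u^0$ and $v^1$, one corresponding to $(u,v)$ occupying $u^1$ and $v^0$, and $K$ each corresponding to $(u,v)$ occupying $u^0$ and $v^0$. Two distinct vertices $a,b$ of $H$, corresponding to edges $e_a,e_b$ of $G$, are adjacent in $H$ if $e_a=e_b$, or if $e_a$ and $e_b$ share exactly one endpoint $w$ and $a,b$ occupy the same port of $w$. Pick a uniformly random permutation of the vertices of $H$ and compute the randomized greedy maximal independent set $I$: scan the vertices in this order and add a vertex to $I$ if none of its neighbors is already in $I$. The output $P$ is the set of edges of $G$ corresponding to vertices of $I$. *)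

From mathcomp Require Import all_boot all_order all_algebra fingroup perm.
Set Implicit Arguments. Unset Strict Implicit. Unset Printing Implicit Defensive.
Import Order.TTheory GRing.Theory Num.Theory.

(* A graph G = (V, E): vertex type T (finite), adjacency e (symmetric,
   irreflexive).  An undirected edge {u,v} is represented canonically by the
   ordered pair (u,v) with enum_rank u < enum_rank v. *)

(* a simple path in G: nonempty, consecutive vertices adjacent, no repeats
   (repeats are excluded globally by uniq (flatten C) below). *)
Definition is_gpath (T : finType) (e : rel T) (p : seq T) : bool :=
  if p is x :: q then path e x q else false.

Definition path_cover (T : finType) (e : rel T) (C : seq (seq T)) : bool :=
  all (is_gpath e) C && uniq (flatten C).

Definition cover_edges (T : finType) (C : seq (seq T)) : nat :=
  \sum_(p <- C) (size p).-1.

Definition is_rho (T : finType) (e : rel T) (r : nat) : Prop :=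
  (exists2 C, path_cover e C & cover_edges C = r) /\
  (forall C, path_cover e C -> cover_edges C <= r).

(* vertex (u, v, c) of H: edge {u,v} (u before v canonically), copy c:
   c = 0 : occupies u^0 and v^1
   c = 1 : occupies u^1 and v^0
   c >= 2 (K copies) : occupies u^0 and v^0 *)
Definition hvalid (T : finType) (e : rel T) (K : nat) (x : T * T * 'I_K.+2) : bool :=
  e x.1.1 x.1.2 && (enum_rank x.1.1 < enum_rank x.1.2)%N.

Notation HV e K := {x : _ * _ * 'I_K.+2 | hvalid e x}.

Definition hedge (T : finType) (e : rel T) (K : nat) (a : HV e K) : T * T :=
  (val a).1.

(* the port of endpoint w occupied by vertex a (meaningful for w an endpoint) *)
Definition hport (T : finType) (e : rel T) (K : nat) (a : HV e K) (w : T) : bool :=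
  if w == (val a).1.1 then (nat_of_ord (val a).2 == 1)%N
  else (nat_of_ord (val a).2 == 0)%N.

Definition hends (T : finType) (e : rel T) (K : nat) (a : HV e K) : {set T} :=
  [set (val a).1.1; (val a).1.2].

Definition hadj (T : finType) (e : rel T) (K : nat) : rel (HV e K) :=
  fun a b =>
    (a != b) &&
    ((hedge a == hedge b) ||
     ((#|hends a :&: hends b| == 1)%N &&
      [exists w in hends a :&: hends b, hport a w == hport b w])).

Definition greedy_mis (A : eqType) (adj : rel A) (s : seq A) : seq A :=
  foldl (fun I x => if has (adj x) I then I else rcons I x) [::] s.

Definition alg2_output (T : finType) (e : rel T) (K : nat) (s : {perm HV e K})
  : {set T * T} :=
  [set hedge x | x in greedy_mis (@hadj T e K) [seq s y | y <- enum [set: HV e K]]].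

Definition alg2_expected (T : finType) (e : rel T) (K : nat) : rat :=
  ((\sum_(s : {perm HV e K}) #|alg2_output s|)%:R / #|{perm HV e K}|%:R)%R.

From mathcomp Require Import all_boot all_order all_algebra fingroup perm.
From mathcomp Require Import zify ring lra.
Set Implicit Arguments. Unset Strict Implicit. Unset Printing Implicit Defensive.

(* Let I be the greedy maximal independent set of H, and call an element of I
   untouched when no earlier element of I shares an endpoint with it.
   Lower bound: for every edge ab of G the two directed copies of ab are blocked
   through their own port at a or b, which gives at least two incidences of I at
   {a, b}; summing along the paths of an optimal path cover yields rho <= 2 |I|.
   Upper bound: each port is occupied by at most one element of I.  Adding the
   elements in greedy order, every one that is not directed and untouched joins
   ends of two different paths (around a cycle the ports would alternate, making
   the cycle directed and its first element untouched), so
   |I| <= rho + #(directed untouched).  Untouched elements form a matching, hence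
   number at most rho, and exchanging two copies of an edge in the random order
   shows that all K + 2 copies are untouched equally often: in expectation the
   2 directed copies count 2/K times the K undirected ones. *)

Section GreedyMIS.
Variables (A : eqType) (adj : rel A).

Definition greedy_step (I : seq A) (x : A) : seq A :=
  if has (adj x) I then I else rcons I x.

Definition independent (I : seq A) : Prop := {in I &, forall a b, ~~ adj a b}.

Lemma greedy_misE s : greedy_mis adj s = foldl greedy_step [::] s.
Proof. by []. Qed.

Lemma foldl_greedy_step I s :
  exists2 J, foldl greedy_step I s = I ++ J & subseq J s.
Proof.
elim: s I => [|x s IHs] I /=; first by exists [::]; rewrite ?cats0.
rewrite {2}/greedy_step; case: ifP => _.
  have [J -> sJ] := IHs I; exists J => //.
  exact: subseq_trans sJ (subseq_cons s x).
have [J -> sJ] := IHs (rcons I x); exists (x :: J); first by rewrite -cats1 -catA.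
by rewrite /= eqxx.
Qed.

Lemma greedy_mis_subseq s : subseq (greedy_mis adj s) s.
Proof. by rewrite greedy_misE; have [J -> sJ] := foldl_greedy_step [::] s. Qed.

Lemma greedy_mis_uniq s : uniq s -> uniq (greedy_mis adj s).
Proof. exact: subseq_uniq (greedy_mis_subseq s). Qed.

Lemma greedy_mis_cat_cons L1 x L2 : ~~ has (adj x) (greedy_mis adj L1) ->
  exists J, greedy_mis adj (L1 ++ x :: L2) = greedy_mis adj L1 ++ x :: J.
Proof.
move=> x_free; rewrite !greedy_misE foldl_cat /= {2}/greedy_step (negbTE x_free).
have [J -> _] := foldl_greedy_step (rcons (foldl greedy_step [::] L1) x) L2.
by exists J; rewrite -cats1 -catA.
Qed.

Lemma greedy_mis_cat_blocked L1 x L2 : x \notin L1 ++ L2 ->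
  has (adj x) (greedy_mis adj L1) -> x \notin greedy_mis adj (L1 ++ x :: L2).
Proof.
move=> xL blocked; rewrite !greedy_misE foldl_cat /= {2}/greedy_step -greedy_misE blocked.
have [J -> sJ] := foldl_greedy_step (greedy_mis adj L1) L2.
apply: contra xL; rewrite !mem_cat => /orP[/(mem_subseq (greedy_mis_subseq L1)) -> //|].
by move/(mem_subseq sJ) ->; rewrite orbT.
Qed.

Lemma greedy_mis_dominating s y : y \in s ->
  (y \in greedy_mis adj s) || has (adj y) (greedy_mis adj s).
Proof.
have extend I s' : (y \in I) || has (adj y) I ->
    (y \in foldl greedy_step I s') || has (adj y) (foldl greedy_step I s').
  have [J -> _] := foldl_greedy_step I s'; rewrite mem_cat has_cat.
  by case/orP => ->; rewrite ?orbT.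
rewrite greedy_misE; elim: s [::] => [|x s IHs] I //=.
rewrite inE => /orP[/eqP<- | ys]; last exact: IHs.
apply: extend; rewrite /greedy_step; case: ifP => [-> | _]; first by rewrite orbT.
by rewrite mem_rcons mem_head.
Qed.

Hypotheses (adj_sym : symmetric adj) (adj_irr : irreflexive adj).

Lemma greedy_mis_independent s : independent (greedy_mis adj s).
Proof.
rewrite greedy_misE; have : independent [::] by [].
elim: s [::] => [|x s IHs] I indI //=; apply: IHs.
rewrite /greedy_step; case: ifP => // /negbT/hasPn xI a b.
rewrite !mem_rcons !inE => /orP[/eqP-> | aI] /orP[/eqP-> | bI].
- by rewrite adj_irr.
- exact: xI.
- by rewrite adj_sym xI.
- exact: indI.
Qed.

End GreedyMIS.

Section Untouched.
Variables (A : eqType) (touch : rel A).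

Definition untouched (I : seq A) (y : A) : bool :=
  (y \in I) && all (fun z => ~~ touch z y) (take (index y I) I).

Lemma untouched_cat I x J : x \notin I ->
  untouched (I ++ x :: J) x = all (fun z => ~~ touch z x) I.
Proof.
move=> xI; rewrite /untouched mem_cat mem_head orbT index_cat (negbTE xI) /=.
by rewrite eqxx addn0 take_size_cat.
Qed.

Lemma untouched_rcons I x y : y \in I -> untouched (rcons I x) y = untouched I y.
Proof.
move=> yI; rewrite /untouched -cats1 mem_cat yI index_cat yI.
by rewrite takel_cat ?index_size.
Qed.

Lemma untouched_pairwise I : uniq I ->
  pairwise (fun a b => ~~ touch a b) [seq y <- I | untouched I y].
Proof.
elim/last_ind: I => [//|I x IHI]; rewrite rcons_uniq => /andP[xI uI].
rewrite filter_rcons (eq_in_filter (a2 := untouched I)); last first.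
  by move=> y yI; rewrite untouched_rcons.
case: ifP => [x_untouched | _]; last exact: IHI.
rewrite pairwise_rcons IHI // andbT; apply/allP => y.
rewrite mem_filter => /andP[_ yI]; move: x_untouched.
by rewrite -cats1 untouched_cat // => /allP; apply.
Qed.

End Untouched.

Section GreedySwap.
Variables (A : finType) (adj touch : rel A).
Hypotheses (touch_sym : symmetric touch) (touch_refl : reflexive touch).
Hypothesis adj_touch : subrel adj touch.

Local Notation greedy := (greedy_mis adj).
Local Notation untouched := (untouched touch).

(* Nothing before [x] touches [x'], so the run on the swapped order is unchanged
   up to that point and picks [x'] in place of [x]. *)
Lemma greedy_mis_swap L x x' : uniq L -> x' \in L -> touch^~ x =1 touch^~ x' ->
  untouched (greedy L) x -> untouched (greedy (map (tperm x x') L)) x'.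
Proof.
move=> uL x'L touch_xx' xU; have /andP[xG _] := xU.
have xL := mem_subseq (greedy_mis_subseq adj L) xG.
case/splitPr: xL uL x'L xG xU => L1 L2.
rewrite cat_uniq /= => /and3P[_ /norP[xL1 _] /andP[xL2 _]] x'L xG.
have xG1 : x \notin greedy L1 by apply: contra xL1; apply/mem_subseq/greedy_mis_subseq.
have x_free : ~~ has (adj x) (greedy L1).
  by apply: contraL xG; apply: greedy_mis_cat_blocked; rewrite mem_cat negb_or xL1.
have [J ->] := greedy_mis_cat_cons L2 x_free; rewrite untouched_cat // => /allP G1_x.
have G1_x' z : z \in greedy L1 -> ~~ touch z x' by rewrite -touch_xx'; apply: G1_x.
have x'_free : ~~ has (adj x') (greedy L1).
  by apply/hasPn => z /G1_x'; rewrite touch_sym; apply: contra; apply: adj_touch.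
have x'G1 : x' \notin greedy L1 by apply/negP => /G1_x'; rewrite touch_refl.
have x'L1 : x' \notin L1.
  by apply/negP => /(greedy_mis_dominating adj); rewrite (negbTE x'G1) (negbTE x'_free).
rewrite map_cat map_id_in; last first.
  by move=> y yL1; apply: tpermD; apply: contraTneq yL1 => <-.
rewrite /= tpermL.
have [J' ->] := greedy_mis_cat_cons [seq tperm x x' y | y <- L2] x'_free.
by rewrite untouched_cat //; apply/allP.
Qed.

Lemma count_uniq_sum (q : pred A) (I : seq A) : uniq I -> {subset q <= I} ->
  count q I = \sum_(y | q y) 1.
Proof.
move=> uI qI; rewrite -size_filter -(card_uniqP _) ?filter_uniq // sum1dep_card.
apply: eq_card => y; rewrite mem_filter inE.
by apply/andb_idr => /qI.
Qed.

Definition greedy_perm (s : {perm A}) : seq A :=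
  greedy [seq s y | y <- enum [set: A]].

Definition untouched_count (y : A) : nat :=
  #|[set s : {perm A} | untouched (greedy_perm s) y]|.

Lemma perm_enum_uniq (s : {perm A}) : uniq [seq s y | y <- enum [set: A]].
Proof. by rewrite map_inj_uniq ?enum_uniq //; apply: perm_inj. Qed.

Lemma mem_perm_enum (s : {perm A}) y : y \in [seq s y | y <- enum [set: A]].
Proof. by apply/mapP; exists ((s^-1)%g y); rewrite ?mem_enum ?inE ?permKV. Qed.

Lemma greedy_perm_uniq s : uniq (greedy_perm s).
Proof. exact/greedy_mis_uniq/perm_enum_uniq. Qed.

Lemma untouched_count_le y y' : touch^~ y =1 touch^~ y' ->
  untouched_count y <= untouched_count y'.
Proof.
move=> touch_yy'; rewrite /untouched_count -(card_imset _ (mulIg (tperm y y'))).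
apply/subset_leq_card/subsetP => _ /imsetP[s ys ->]; rewrite !inE /greedy_perm in ys *.
have -> : [seq (s * tperm y y')%g z | z <- enum [set: A]] =
          map (tperm y y') [seq s z | z <- enum [set: A]].
  by rewrite -map_comp; apply: eq_map => z; rewrite /= permM.
exact: greedy_mis_swap (perm_enum_uniq s) (mem_perm_enum s y') touch_yy' ys.
Qed.

Lemma untouched_count_eq y y' : touch^~ y =1 touch^~ y' ->
  untouched_count y = untouched_count y'.
Proof.
by move=> touch_yy'; apply/eqP; rewrite eqn_leq !untouched_count_le.
Qed.

Lemma sum_count_untouched (P : pred A) :
  \sum_(s : {perm A})
     count (fun y => P y && untouched (greedy_perm s) y) (greedy_perm s) =
  \sum_(y : A) P y * untouched_count y.
Proof.
rewrite (eq_bigr (fun s => \sum_(y | P y && untouched (greedy_perm s) y) 1)); last first.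
  by move=> s _; apply: count_uniq_sum (greedy_perm_uniq s) _ => y /andP[_ /andP[]].
rewrite (exchange_big_dep P) /=; last by move=> s y _ /andP[].
rewrite big_mkcond; apply: eq_bigr => y _.
case: (P y); rewrite ?mul0n ?mul1n // /untouched_count -sum1dep_card.
by apply: eq_bigl => s.
Qed.

End GreedySwap.

Lemma last_rev (A : Type) (w : A) p : last w (rev p) = head w p.
Proof. by case: p => [//|x q]; rewrite rev_cons last_rcons. Qed.

Lemma head_rev (A : Type) (w : A) p : head w (rev p) = last w p.
Proof. by rewrite -{2}(revK p) last_rev. Qed.

Section PathCovers.
Variables (T : finType) (R : rel T).

Definition at_end (p : seq T) (w : T) : bool := (head w p == w) || (last w p == w).

Lemma sub_path_cover (R' : rel T) C : subrel R R' -> path_cover R C -> path_cover R' C.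
Proof.
move=> sRR' /andP[/allP gC uC]; rewrite /path_cover uC andbT.
apply/allP => -[|x p] /gC //=; exact: sub_path.
Qed.

Lemma path_cover_perm C C' : perm_eq C C' -> path_cover R C = path_cover R C'.
Proof.
by move=> pC; rewrite /path_cover (perm_all _ pC) (perm_uniq (perm_flatten pC)).
Qed.

Lemma cover_edges_cons (p : seq T) (C : seq (seq T)) :
  cover_edges (p :: C) = (size p).-1 + cover_edges C.
Proof. exact: big_cons. Qed.

Lemma is_gpath_neq0 p : is_gpath R p -> 0 < size p.
Proof. by case: p. Qed.

Lemma uniq_flatten_mem (C : seq (seq T)) p : uniq (flatten C) -> p \in C -> uniq p.
Proof.
elim: C => [//|q C IHC] /=; rewrite cat_uniq inE => /and3P[uq _ uC].
by case/orP => [/eqP-> // | /IHC]; apply.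
Qed.

Lemma cover_edges_perm (C C' : seq (seq T)) :
  perm_eq C C' -> cover_edges C = cover_edges C'.
Proof. exact: perm_big. Qed.


Lemma is_gpath_cat_edge p q u v : is_gpath R p -> is_gpath R q ->
  last u p = u -> head v q = v -> R u v -> is_gpath R (p ++ q).
Proof.
case: p => [//|x p] /= gp; case: q => [//|y q] /= gq lp <- Ruv.
by rewrite cat_path gp /= lp Ruv.
Qed.


Lemma cover_edges_cat_edge (p q : seq T) (C : seq (seq T)) :
  0 < size p -> 0 < size q ->
  cover_edges ((p ++ q) :: C) = (cover_edges (p :: q :: C)).+1.
Proof.
rewrite !cover_edges_cons size_cat addnA.
by case: (size p) => // m; case: (size q) => // n; rewrite addSn addnS.
Qed.


Hypothesis R_sym : symmetric R.

Lemma is_gpath_rev p : is_gpath R (rev p) = is_gpath R p.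
Proof.
case: p => [//|x q]; rewrite {1}lastI rev_rcons /= rev_path.
by apply: eq_path => a b; rewrite /= R_sym.
Qed.

Lemma gpath_orient_last p w : is_gpath R p -> at_end p w ->
  exists p', [/\ is_gpath R p', perm_eq p p' & last w p' = w].
Proof.
move=> gp /orP[/eqP hw | /eqP lw]; last by exists p.
by exists (rev p); rewrite is_gpath_rev last_rev perm_sym perm_rev.
Qed.

Lemma gpath_orient_head p w : is_gpath R p -> at_end p w ->
  exists p', [/\ is_gpath R p', perm_eq p p' & head w p' = w].
Proof.
move=> gp /(gpath_orient_last gp) [p' [gp' pp' lw]].
by exists (rev p'); rewrite is_gpath_rev head_rev perm_sym perm_rev perm_sym.
Qed.

Lemma path_cover_join C u v : path_cover R C -> R u v ->
  u \in flatten C -> v \in flatten C ->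
  {in C, forall p, u \in p -> at_end p u} -> {in C, forall p, v \in p -> at_end p v} ->
  {in C, forall p, u \in p -> v \notin p} ->
  exists2 C', path_cover R C' & cover_edges C' = (cover_edges C).+1.
Proof.
move=> pcC Ruv /flattenP[p pC up] vC end_u end_v sep.
have vp : v \notin p by apply: sep.
have /flattenP[q qC0 vq] : v \in flatten (rem p C).
  by move: vC; rewrite (perm_mem (perm_flatten (perm_to_rem pC))) /= mem_cat (negbTE vp).
have qC : q \in C := mem_rem qC0.
have pqC : perm_eq C (p :: q :: rem q (rem p C)).
  by apply: perm_trans (perm_to_rem pC) _; rewrite perm_cons perm_to_rem.
move: pcC; rewrite (path_cover_perm pqC) (cover_edges_perm pqC) /path_cover /=.
case/andP=> /and3P[gp gq gC1] upqC1.
have [p' [gp' pp' lu]] := gpath_orient_last gp (end_u p pC up).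
have [q' [gq' qq' hv]] := gpath_orient_head gq (end_v q qC vq).
exists ((p' ++ q') :: rem q (rem p C)).
  rewrite /path_cover /= gC1 (is_gpath_cat_edge gp' gq' lu hv Ruv) /= -catA.
  by rewrite -(perm_uniq (perm_cat pp' (perm_cat qq' (perm_refl _)))).
by rewrite cover_edges_cat_edge ?is_gpath_neq0 // !cover_edges_cons (perm_size pp')
  (perm_size qq').
Qed.

Lemma path_cover_extend C w x : path_cover R C -> R w x ->
  w \in flatten C -> x \notin flatten C -> {in C, forall p, w \in p -> at_end p w} ->
  exists2 C', path_cover R C' & cover_edges C' = (cover_edges C).+1.
Proof.
move=> pcC Rwx /flattenP[p pC wp] xC end_w.
have pC0 := perm_to_rem pC.
have xpC0 : x \notin p ++ flatten (rem p C) by rewrite -(perm_mem (perm_flatten pC0)).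
move: pcC; rewrite (path_cover_perm pC0) (cover_edges_perm pC0) /path_cover /=.
case/andP=> /andP[gp gC0] upC0.
have [p' [gp' pp' lw]] := gpath_orient_last gp (end_w p pC wp).
exists ((p' ++ [:: x]) :: rem p C).
  have pp'C0 := perm_cat pp' (perm_refl (flatten (rem p C))).
  rewrite (perm_uniq pp'C0) in upC0; rewrite (perm_mem pp'C0) in xpC0.
  rewrite /path_cover /= gC0 (is_gpath_cat_edge gp' _ lw _ Rwx) //= -catA.
  by rewrite uniq_catCA /= upC0 xpC0.
by rewrite cover_edges_cat_edge ?is_gpath_neq0 // !cover_edges_cons (perm_size pp').
Qed.

Lemma path_cover_add_edge C u v : path_cover R C -> R u v -> u != v ->
  {in C, forall p, u \in p -> at_end p u} -> {in C, forall p, v \in p -> at_end p v} ->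
  {in C, forall p, u \in p -> v \notin p} ->
  exists2 C', path_cover R C' & cover_edges C' = (cover_edges C).+1.
Proof.
move=> pcC Ruv uv end_u end_v sep.
case: (boolP (u \in flatten C)) => uC; case: (boolP (v \in flatten C)) => vC.
- exact: path_cover_join pcC Ruv uC vC end_u end_v sep.
- exact: path_cover_extend pcC Ruv uC vC end_u.
- by apply: path_cover_extend pcC _ vC uC end_v; rewrite R_sym.
- exists ([:: u; v] :: C); last by rewrite cover_edges_cons.
  by move: pcC; rewrite /path_cover /= Ruv inE negb_or uv uC vC => /andP[-> ->].
Qed.

End PathCovers.

Lemma cover_edges_le_rho (T : finType) (e R : rel T) r C :
  is_rho e r -> subrel R e -> path_cover R C -> cover_edges C <= r.
Proof. by move=> [_ rho_max] sRe /(sub_path_cover sRe); apply: rho_max. Qed.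

Section AuxiliaryGraph.
Variables (T : finType) (e : rel T) (K : nat).
Implicit Types (a b y z : HV e K) (I : seq (HV e K)).

Definition htouch a b : bool := ~~ [disjoint hends a & hends b].

Definition hdirected a : bool := (nat_of_ord (val a).2 < 2)%N.

Lemma hends_neq a : (val a).1.1 != (val a).1.2.
Proof. by case: a => -[[u v] c] /= /andP[_]; apply: contraTneq => ->; rewrite ltnn. Qed.

Lemma mem_hends1 a : (val a).1.1 \in hends a.
Proof. by rewrite !inE eqxx. Qed.

Lemma mem_hends2 a : (val a).1.2 \in hends a.
Proof. by rewrite !inE eqxx orbT. Qed.

Lemma card_hends a : #|hends a| = 2.
Proof. by rewrite cards2 hends_neq. Qed.

Lemma hends_set2 a t w : t != w -> t \in hends a -> w \in hends a ->
  hends a = [set t; w].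
Proof.
move=> tw ta wa; apply/esym/eqP; rewrite eqEcard card_hends cards2 tw andbT.
by apply/subsetP => x /set2P[]->.
Qed.

Lemma eq_hedge_hends a b : hedge a = hedge b <-> hends a = hends b.
Proof.
split=> [|]; first by rewrite /hends /hedge => ->.
case: a b => -[[u1 v1] c1] H1 [[[u2 v2] c2] H2].
have /andP[_ lt1] := H1; have /andP[_ lt2] := H2.
rewrite /hedge /hends /= => /setP E.
have := E u1; have := E v1; rewrite !inE !eqxx orbT /=.
move=> /esym/orP[]/eqP Ev /esym/orP[]/eqP Eu; subst; rewrite /= ?ltnn // in lt1 lt2 *.
by have := ltn_trans lt1 lt2; rewrite ltnn.
Qed.

Lemma hedge_common2 a b t w : t != w -> t \in hends a -> w \in hends a ->
  t \in hends b -> w \in hends b -> hedge a = hedge b.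
Proof.
by move=> tw ta wa tb wb; apply/eq_hedge_hends;
  rewrite (hends_set2 tw ta wa) (hends_set2 tw tb wb).
Qed.

Lemma hadj_sym : symmetric (@hadj T e K).
Proof.
move=> a b; rewrite /hadj eq_sym (eq_sym (hedge a)) setIC.
by congr (_ && (_ || (_ && _))); apply: eq_existsb => w; rewrite eq_sym.
Qed.

Lemma hadj_irr : irreflexive (@hadj T e K).
Proof. by move=> a; rewrite /hadj eqxx. Qed.

Lemma hadj_port a b w : a != b -> w \in hends a -> w \in hends b ->
  hport a w = hport b w -> hadj a b.
Proof.
move=> ab wa wb hp; rewrite /hadj ab /=; case: (boolP (hedge a == hedge b)) => //= nh.
have -> : hends a :&: hends b = [set w].
  apply/setP => t; rewrite in_setI in_set1; case: (eqVneq t w) => [-> | tw].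
    by rewrite wa wb.
  by apply: contraNF nh => /andP[ta tb]; apply/eqP; apply: hedge_common2 tw ta wa tb wb.
by rewrite cards1 eqxx /=; apply/existsP; exists w; rewrite in_set1 hp !eqxx.
Qed.

Lemma hadjP a b : hadj a b ->
  hedge a = hedge b \/ exists2 w, w \in hends a :&: hends b & hport a w = hport b w.
Proof.
case/andP=> _ /orP[/eqP | /andP[_ /existsP[w /andP[wab /eqP]]]]; first by left.
by right; exists w.
Qed.

Lemma htouch_sym : symmetric htouch.
Proof. by move=> a b; rewrite /htouch disjoint_sym. Qed.

Lemma htouch_refl : reflexive htouch.
Proof. by move=> a; apply/pred0Pn; exists (val a).1.1; rewrite /= mem_hends1. Qed.

Lemma htouchP a b : reflect (exists2 w, w \in hends a & w \in hends b) (htouch a b).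
Proof.
apply: (iffP pred0Pn) => [[w /andP[wa wb]] | [w wa wb]]; first by exists w.
by exists w; apply/andP.
Qed.

Lemma hadj_htouch : subrel (@hadj T e K) htouch.
Proof.
move=> a b /hadjP[/eq_hedge_hends Eab | [w]]; last first.
  by rewrite in_setI => /andP[wa wb] _; apply/htouchP; exists w.
by apply/htouchP; exists (val a).1.1; rewrite -?Eab mem_hends1.
Qed.

Lemma htouch_hedge a b b' : hedge b = hedge b' -> htouch a b = htouch a b'.
Proof. by move/eq_hedge_hends; rewrite /htouch => ->. Qed.

Lemma hport_directed a w : w \in hends a -> hport a w -> hdirected a.
Proof.
have := hends_neq a; case: a => -[[u v] c] Ha /= uv.
rewrite /hends /hport /hdirected /= => /set2P[]-> ; rewrite ?eqxx; first by move/eqP->.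
by case: ifP => [/eqP vu | _ /eqP->] //; rewrite vu eqxx in uv.
Qed.

Lemma hport_not_both a t w : t != w -> t \in hends a -> w \in hends a ->
  ~~ (hport a t && hport a w).
Proof.
have := hends_neq a; case: a => -[[u v] c] Ha /= uv tw.
rewrite /hends /hport /= => /set2P[] Et /set2P[] Ew; subst t w; rewrite ?eqxx // in tw *;
  case: ifP => [/eqP vu | _]; rewrite ?vu ?eqxx // in uv *; rewrite 1?andbC.
all: by apply/negP => /andP[/eqP E]; rewrite E.
Qed.

Lemma independent_hport_neq I a b w : independent (@hadj T e K) I ->
  a \in I -> b \in I -> a != b -> w \in hends a -> w \in hends b ->
  hport a w != hport b w.
Proof.
move=> indI aI bI ab wa wb; apply: contraNneq (indI a b aI bI) => hp.
exact: hadj_port ab wa wb hp.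
Qed.

Lemma independent_no_triple I y1 y2 y3 w : independent (@hadj T e K) I ->
  y1 \in I -> y2 \in I -> y3 \in I -> y1 != y2 -> y1 != y3 -> y2 != y3 ->
  w \in hends y1 -> w \in hends y2 -> w \in hends y3 -> False.
Proof.
move=> indI i1 i2 i3 n12 n13 n23 w1 w2 w3.
have := independent_hport_neq indI i1 i2 n12 w1 w2.
have := independent_hport_neq indI i1 i3 n13 w1 w3.
have := independent_hport_neq indI i2 i3 n23 w2 w3.
by case: (hport y1 w); case: (hport y2 w); case: (hport y3 w).
Qed.

End AuxiliaryGraph.

Lemma count_gt1 (A : eqType) (p : pred A) s x y : x != y -> x \in s -> y \in s ->
  p x -> p y -> 1 < count p s.
Proof.
move=> xy xs ys px py; have := count_predUI (pred1 x) (pred1 y) s.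
have -> : count (predI (pred1 x) (pred1 y)) s = 0.
  by apply/eqP; rewrite -leqn0 leqNgt -has_count;
    apply/hasP => -[z _ /andP[/eqP-> /eqP]]; apply/eqP.
have : count (predU (pred1 x) (pred1 y)) s <= count p s.
  by apply: sub_count => z /= /orP[]/eqP->.
have : 0 < count (pred1 x) s by rewrite -has_count; apply/hasP; exists x => //=.
have : 0 < count (pred1 y) s by rewrite -has_count; apply/hasP; exists y => //=.
lia.
Qed.

Section LowerBound.
Variables (T : finType) (e : rel T) (K : nat).
Hypotheses (e_sym : symmetric e) (e_irr : irreflexive e).
Variable I : seq (HV e K).
Hypothesis I_dominating : forall y, y \notin I -> has (@hadj T e K y) I.

Definition hdeg (w : T) : nat := count (fun y => w \in hends y) I.

Lemma hdeg_gt0 z w : z \in I -> w \in hends z -> 0 < hdeg w.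
Proof. by move=> zI wz; rewrite -has_count; apply/hasP; exists z. Qed.

Lemma dominated_at_port y : y \notin I -> ~~ has (fun z => hends z == hends y) I ->
  exists2 z, z \in I &
    exists2 w, w \in hends y & (w \in hends z) && (hport y w == hport z w).
Proof.
move=> yI not_parallel.
have /hasP[z zI /hadjP[/eq_hedge_hends Ez | [w]]] := I_dominating yI.
  by case/hasP: not_parallel; exists z; rewrite // Ez.
by rewrite in_setI => /andP[wy wz] hp; exists z => //; exists w; rewrite // wz hp eqxx.
Qed.

(* The copies of [ab] occupying (a^0, b^1) and (a^1, b^0) have opposite ports at
   both endpoints, so their blockers in [I] give two distinct incidences at [a] or [b]. *)
Lemma hdeg_edge a b : e a b -> 2 <= hdeg a + hdeg b.
Proof.
move=> eab; have ab : a != b by apply: contraTneq eab => ->; rewrite e_irr.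
wlog lab : a b eab ab / enum_rank a < enum_rank b.
  move=> wlog_ab; case: (ltngtP (enum_rank a) (enum_rank b)).
  - exact: wlog_ab.
  - by rewrite addnC; apply: wlog_ab; rewrite // 1?e_sym 1?eq_sym.
  - by move/val_inj/enum_rank_inj=> E; rewrite E eqxx in ab.
have hv (c : 'I_K.+2) : hvalid e (a, b, c) by rewrite /hvalid /= eab lab.
pose copy (c : 'I_K.+2) : HV e K := exist _ (a, b, c) (hv c).
pose c1 : 'I_K.+2 := Ordinal (isT : 1 < K.+2).
pose parallel (z : HV e K) := hends z == [set a; b].
have [[z zI /eqP zab] | not_parallel] := altP (@hasP _ parallel I).
  by rewrite -(addn1 1) leq_add ?(hdeg_gt0 zI) // zab !inE eqxx ?orbT.
have blocked c : exists2 z, z \in I &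
    exists2 w, w \in [set a; b] & (w \in hends z) && (hport (copy c) w == hport z w).
  have cI : copy c \notin I.
    by apply: contra not_parallel => cI; apply/hasP; exists (copy c) => //; apply: eqxx.
  exact: dominated_at_port cI not_parallel.
have [z0 z0I [w0 w0ab /andP[w0z0 /eqP hp0]]] := blocked ord0.
have [z1 z1I [w1 w1ab /andP[w1z1 /eqP hp1]]] := blocked c1.
have opposite w : w \in [set a; b] -> hport (copy ord0) w != hport (copy c1) w.
  rewrite /hport /= => /set2P[]->; rewrite ?eqxx //.
  by case: ifP => // /eqP ba; rewrite ba eqxx in ab.
case: (eqVneq w0 w1) => [Ew | w01].
  subst w1; have z01 : z0 != z1.
    by apply: contraNneq (opposite w0 w0ab) => Ez; rewrite hp0 hp1 Ez.
  have := @count_gt1 _ (fun y => w0 \in hends y) _ _ _ z01 z0I z1I w0z0 w1z1.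
  rewrite -/(hdeg w0); case/set2P: w0ab => -> two.
    exact: leq_trans two (leq_addr _ _).
  exact: leq_trans two (leq_addl _ _).
have := hdeg_gt0 z0I w0z0; have := hdeg_gt0 z1I w1z1.
by move: w0ab w1ab w01 => /set2P[]-> /set2P[]->; rewrite ?eqxx // => _; lia.
Qed.

Lemma hdeg_path x q : path e x q -> size q <= \sum_(w <- x :: q) hdeg w.
Proof.
suff: path e x q -> 2 * size q + hdeg x <= 2 * \sum_(w <- x :: q) hdeg w by lia.
elim: q x => [|y q IHq] x /=; first by rewrite big_seq1; lia.
case/andP=> exy /IHq; have := hdeg_edge exy; rewrite !big_cons; lia.
Qed.

Lemma sum_hdeg : \sum_(w : T) hdeg w = 2 * size I.
Proof.
under eq_bigr => w _ do rewrite /hdeg -sum1_count big_mkcond /=.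
rewrite exchange_big /= -sum1_size big_distrr /=; apply: eq_bigr => y _.
by rewrite -big_mkcond sum1_card card_hends.
Qed.

Lemma rho_le_twice_size r : is_rho e r -> r <= 2 * size I.
Proof.
case=> -[C /andP[/allP gC uC] <-] _; rewrite -sum_hdeg.
apply: (@leq_trans (\sum_(p <- C) \sum_(w <- p) hdeg w)).
  by rewrite /cover_edges big_seq [leqRHS]big_seq;
    apply: leq_sum => -[|x q] /gC //= /hdeg_path.
by rewrite -big_flatten /= big_uniq // [leqRHS](bigID (mem (flatten C))) leq_addr.
Qed.

End LowerBound.

Section Matching.
Variables (T : finType) (e : rel T) (K : nat).

Definition hedge_path (y : HV e K) : seq T := [:: (val y).1.1; (val y).1.2].

Lemma path_cover_hedge_paths J : pairwise (fun a b => ~~ htouch a b) J ->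
  path_cover e (map hedge_path J).
Proof.
elim: J => [//|y J IHJ] /andP[/allP y_free /IHJ /andP[gJ uJ]].
rewrite /path_cover /= gJ andbT; have /andP[eyy _] := valP y.
have y_out w : w \in hends y -> w \notin flatten (map hedge_path J).
  move=> wy; apply/flatten_mapP => -[z zJ wz]; move/negP: (y_free z zJ); apply.
  by apply/htouchP; exists w => //; move: wz; rewrite !inE.
by rewrite eyy uJ inE negb_or hends_neq !y_out ?mem_hends1 ?mem_hends2.
Qed.

Lemma cover_edges_hedge_paths J : cover_edges (map hedge_path J) = size J.
Proof. by rewrite /cover_edges big_map sum1_size. Qed.

Lemma count_untouched_le_rho I r : uniq I -> is_rho e r ->
  count (untouched (@htouch T e K) I) I <= r.
Proof.
move=> uI [_ rho_max]; rewrite -size_filter -cover_edges_hedge_paths.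
exact/rho_max/path_cover_hedge_paths/untouched_pairwise.
Qed.

End Matching.

Lemma ordS_val n (i : 'I_n) : nat_of_ord (ordS i) = if i.+1 == n then 0 else i.+1.
Proof.
rewrite /ordS /=; case: eqP => [-> | ne]; first by rewrite modnn.
by rewrite modn_small //; have := ltn_ord i; lia.
Qed.

Lemma ordS_neq n (i : 'I_n) : 1 < n -> ordS i != i.
Proof.
move=> n1; apply/negP => /eqP/(congr1 (@nat_of_ord n)); rewrite ordS_val.
by have := ltn_ord i; case: eqP; lia.
Qed.

Lemma ordSS_neq n (i : 'I_n) : 2 < n -> ordS (ordS i) != i.
Proof.
move=> n2; apply/negP => /eqP/(congr1 (@nat_of_ord n)); rewrite !ordS_val.
by have := ltn_ord i; case: (@eqP _ i.+1 n) => /=; case: eqP; lia.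
Qed.

Lemma cycle_alternation n (a b : 'I_n -> bool) :
  (forall i, b i != a (ordS i)) -> (forall i, ~~ (a i && b i)) -> forall i, a i || b i.
Proof.
move=> ba_neq not_both j; apply/negPn/negP => /norP[/negbTE aj /negbTE bj].
have sum_n : \sum_(i < n) (a i + b i) = n.
  rewrite big_split /= (reindex_inj (@ordS_inj n)) -big_split /=.
  rewrite -[n in RHS]card_ord -sum1_card; apply: eq_bigr => i _.
  by move: (ba_neq i); case: (a (ordS i)); case: (b i).
have : \sum_(i < n) (a i + b i) <= n.-1.
  rewrite (bigD1 j) //= aj bj add0n -[n in n.-1]card_ord -(cardC1 j) -sum1_card.
  by apply: leq_sum => i _; move: (not_both i); case: (a i); case: (b i).
by rewrite sum_n; have := ltn_ord j; lia.
Qed.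

Section ResidualGraph.
Variables (T : finType) (e : rel T) (K : nat).
Implicit Types (I : seq (HV e K)) (y z : HV e K).
Local Notation hadj := (@hadj T e K).
Local Notation untouched := (untouched (@htouch T e K)).

Definition directed_untouched I y : bool := hdirected y && untouched I y.

Definition residual I : rel T :=
  fun a b => [exists z, [&& z \in I, ~~ directed_untouched I z & hends z == [set a; b]]].

Lemma hends_set2_neq y a b : hends y = [set a; b] -> a != b.
Proof. by move=> E; have := card_hends y; rewrite E cards2; case: (a != b). Qed.

Lemma hedge_set2 y a b : hends y = [set a; b] ->
  (val y).1 = (a, b) \/ (val y).1 = (b, a).
Proof.
move=> E; rewrite [(val y).1]surjective_pairing.
have := hends_neq y; have := mem_hends1 y; have := mem_hends2 y.
by rewrite E => /set2P[]-> /set2P[]->; rewrite ?eqxx // => _; [right | left].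
Qed.

Lemma residual_sym I : symmetric (residual I).
Proof. by move=> a b; apply: eq_existsb => z; rewrite setUC. Qed.

Lemma residual_sub I : symmetric e -> subrel (residual I) e.
Proof.
move=> e_sym a b /existsP[z /and3P[_ _ /eqP/hedge_set2]].
by have /andP[ez _] := valP z; case=> Ez; rewrite Ez in ez; rewrite // e_sym.
Qed.

Lemma directed_untouched_rcons I x y :
  y \in I -> directed_untouched (rcons I x) y = directed_untouched I y.
Proof. by move=> yI; rewrite /directed_untouched untouched_rcons. Qed.

Lemma residual_rcons I x : subrel (residual I) (residual (rcons I x)).
Proof.
move=> a b /existsP[z /and3P[zI zD zE]]; apply/existsP; exists z.
by rewrite mem_rcons inE zI orbT directed_untouched_rcons // zD.
Qed.

Section Cycle.
Variables (I : seq (HV e K)) (n : nat) (v : 'I_n -> T) (z : 'I_n -> HV e K).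
Hypotheses (I_indep : independent hadj I) (n_gt2 : 2 < n) (v_inj : injective v).
Hypothesis zI : forall i, z i \in I.
Hypothesis z_ends : forall i, hends (z i) = [set v i; v (ordS i)].

Let mem_z1 i : v i \in hends (z i). Proof. by rewrite z_ends !inE eqxx. Qed.
Let mem_z2 i : v (ordS i) \in hends (z i). Proof. by rewrite z_ends !inE eqxx orbT. Qed.

Lemma cycle_ends_neq i : v i != v (ordS i).
Proof. by apply: contra_neq (ordS_neq i (ltnW n_gt2)) => /v_inj/esym. Qed.

Lemma cycle_next_neq i : z i != z (ordS i).
Proof.
apply/eqP => E; move: (mem_z1 i); rewrite E z_ends => /set2P[/v_inj | /v_inj] Ei.
  by move: (ordS_neq i (ltnW n_gt2)); rewrite -Ei eqxx.
by move: (ordSS_neq i n_gt2); rewrite -Ei eqxx.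
Qed.

(* Consecutive elements occupy different ports of their common vertex, so every
   element holds port 1 at one of its ends, which undirected copies never do. *)
Lemma cycle_directed i : hdirected (z i).
Proof.
pose a i := hport (z i) (v i); pose b i := hport (z i) (v (ordS i)).
have := @cycle_alternation n a b _ _ i; case/(_ _ _)/orP.
- move=> k; apply: independent_hport_neq I_indep (zI k) (zI (ordS k)) _ _ (mem_z1 _).
    exact: cycle_next_neq.
  exact: mem_z2.
- by move=> k; apply: hport_not_both (cycle_ends_neq k) (mem_z1 k) (mem_z2 k).
- exact: hport_directed (mem_z1 i).
- exact: hport_directed (mem_z2 i).
Qed.

(* The element of the cycle coming first in [I] is untouched: an earlier element
   touching it would be a third element of [I] at one of its endpoints. *)
Lemma cycle_has_directed_untouched : exists i, directed_untouched I (z i).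
Proof.
have i0 : 'I_n by exists 0; lia.
have [j _ j_first] := @arg_minnP _ i0 xpredT (fun k => index (z k) I) isT.
exists j; rewrite /directed_untouched cycle_directed /untouched zI /=.
apply/allP => y yj; apply/negP => /htouchP[w wy wzj].
have yI : y \in I := mem_take yj.
have y_neq k : y != z k.
  by apply: contraTneq (index_ltn yj) => ->; rewrite -leqNgt j_first.
move: wzj; rewrite z_ends => /set2P[] Ew; subst w.
- have Ej : ordS (ord_pred j) = j := ord_predK j.
  apply: (independent_no_triple I_indep yI (zI (ord_pred j)) (zI j) (y_neq _) (y_neq _)
    _ wy).
  + by move: (cycle_next_neq (ord_pred j)); rewrite Ej.
  + by move: (mem_z2 (ord_pred j)); rewrite Ej.
  + exact: mem_z1.
- exact: independent_no_triple I_indep yI (zI j) (zI (ordS j)) (y_neq _) (y_neq _)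
  (cycle_next_neq j) wy (mem_z2 j) (mem_z1 _).
Qed.

End Cycle.

Lemma residual_path_end I x C p w : x \notin I -> independent hadj (rcons I x) ->
  path_cover (residual I) C -> p \in C -> w \in p -> w \in hends x -> at_end p w.
Proof.
move=> xI indx /andP[/allP gC uC] pC wp wx.
have := gC p pC; have := uniq_flatten_mem uC pC.
case: p wp {pC} => [//|x0 q] wp uq gq.
rewrite /at_end /=; case: (eqVneq x0 w) => //= x0w; apply/negPn/negP => not_last.
have wq : w \in q by move: wp; rewrite inE eq_sym (negbTE x0w).
case/splitPr: wq gq uq not_last => q1 [|b q2] gq uq; first by rewrite last_cat eqxx.
move=> _; rewrite /= cat_path /= in gq; case/and4P: gq => _ Raw Rwb _.
set a := last x0 q1 in Raw.
have ab : a != b.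
  move: uq; rewrite -cat_cons cat_uniq => /and3P[_ /hasPn b_out _].
  have /b_out : b \in w :: b :: q2 by rewrite !inE eqxx orbT.
  by apply: contraNneq => <-; rewrite /= mem_last.
case/existsP: Raw => z1 /and3P[z1I _ /eqP E1];
  case/existsP: Rwb => z2 /and3P[z2I _ /eqP E2].
have in_rcons y : y \in I -> y \in rcons I x by move=> yI; rewrite mem_rcons inE yI orbT.
have x_neq y : y \in I -> x != y by move=> yI; apply: contraNneq xI => ->.
have z12 : z1 != z2.
  apply: contra_neq ab => Ez; have : a \in hends z2 by rewrite -Ez E1 !inE eqxx.
  rewrite E2 => /set2P[Eaw | //].
  by move: (hends_set2_neq E1); rewrite Eaw eqxx.
apply: (independent_no_triple indx _ (in_rcons _ z1I) (in_rcons _ z2I) (x_neq _ z1I)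
  (x_neq _ z2I) z12 wx).
- by rewrite mem_rcons mem_head.
- by rewrite E1 !inE eqxx orbT.
- by rewrite E2 !inE eqxx.
Qed.

Lemma residual_path_not_closed I x a0 q : x \notin I -> independent hadj (rcons I x) ->
  ~~ directed_untouched (rcons I x) x -> path (residual I) a0 q -> uniq (a0 :: q) ->
  hends x = [set a0; last a0 q] -> False.
Proof.
move=> xI indx xD gq uq hx.
have x_in : x \in rcons I x by rewrite mem_rcons mem_head.
have in_rcons y : y \in I -> y \in rcons I x by move=> yI; rewrite mem_rcons inE yI orbT.
case: q => [|b1 [|b2 q]] in gq uq hx *.
- by have := hends_set2_neq hx; rewrite eqxx.
- move: gq => /= /andP[/existsP[z /and3P[zI _ /eqP zE]] _].
  have zx : z != x by apply: contraNneq xI => <-.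
  have hzx : hedge z = hedge x by apply/eq_hedge_hends; rewrite zE hx.
  by move: (indx z x (in_rcons _ zI) x_in); rewrite /hadj zx hzx eqxx.
set p := [:: a0, b1, b2 & q]; pose n := size p.
pose v (i : 'I_n) := nth a0 p i.
have v_inj : injective v.
  by move=> i j /eqP; rewrite /v nth_uniq ?ltn_ord // => /eqP/val_inj.
pose closing (i : 'I_n) y :=
  [&& y \in rcons I x, ~~ directed_untouched (rcons I x) y &
      hends y == [set v i; v (ordS i)]].
have closingP i : exists y, closing i y.
  rewrite /closing /v; have := ordS_val i; case: eqP => [i_last | i_inner] ->.
    exists x; rewrite x_in xD hx setUC /=; apply/eqP; congr [set _; _].
    by move: i_last; rewrite /n /= => -[->]; rewrite -last_nth.
  have i_lt : i < size [:: b1, b2 & q].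
    by have := ltn_ord i; move: i_inner; rewrite /n /=; lia.
  have /existsP[y /and3P[yI yD yE]] := pathP a0 gq i i_lt.
  by exists y; rewrite in_rcons // directed_untouched_rcons // yD.
pose z i := xchoose (closingP i).
have zP i : closing i (z i) := xchooseP (closingP i).
have zI i : z i \in rcons I x by case/and3P: (zP i).
have z_ends i : hends (z i) = [set v i; v (ordS i)] by case/and3P: (zP i) => _ _ /eqP.
have [j] := cycle_has_directed_untouched indx (isT : 2 < n) v_inj zI z_ends.
by case/and3P: (zP j) => _ /negP.
Qed.

Lemma residual_cover I : uniq I -> independent hadj I ->
  exists2 C, path_cover (residual I) C
    & cover_edges C + count (directed_untouched I) I = size I.
Proof.
elim/last_ind: I => [|I x IHI]; first by exists [::]; rewrite // /cover_edges big_nil.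
rewrite rcons_uniq => /andP[xI uI] indx.
have indI : independent hadj I.
  by move=> a b aI bI; apply: indx; rewrite mem_rcons inE ?aI ?bI orbT.
have [C pcC cC] := IHI uI indI.
have count_rcons : count (directed_untouched (rcons I x)) (rcons I x) =
                   count (directed_untouched I) I + directed_untouched (rcons I x) x.
  rewrite -cats1 count_cat /= addn0 cats1; congr (_ + _).
  by apply: eq_in_count => y yI; rewrite directed_untouched_rcons.
have pcC' := sub_path_cover (@residual_rcons I x) pcC.
rewrite size_rcons count_rcons; case: (boolP (directed_untouched (rcons I x) x)) => xD.
  by exists C; rewrite // addnA cC addn1.
set u := (val x).1.1; set v := (val x).1.2.
have Ruv : residual (rcons I x) u v.
  by apply/existsP; exists x; rewrite mem_rcons mem_head xD; apply: eqxx.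
have end_u p : p \in C -> u \in p -> at_end p u.
  by move=> pC up; apply: residual_path_end xI indx pcC pC up (mem_hends1 x).
have end_v p : p \in C -> v \in p -> at_end p v.
  by move=> pC vp; apply: residual_path_end xI indx pcC pC vp (mem_hends2 x).
have sep p : p \in C -> u \in p -> v \notin p.
  move=> pC up; apply/negP => vp; case/andP: pcC => /allP gC uC.
  move: (end_u p pC up) (end_v p pC vp) (gC p pC) (uniq_flatten_mem uC pC).
  case: p {pC up vp} => [//|a0 q]; rewrite /at_end /=.
  have uv := hends_neq x; rewrite -/u -/v in uv.
  move=> /orP[]/eqP Eu /orP[]/eqP Ev gq uq.
  - by rewrite -Eu -Ev eqxx in uv.
  - by apply: (residual_path_not_closed xI indx xD gq uq); rewrite /hends -/u -/v Ev Eu.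
  - by apply: (residual_path_not_closed xI indx xD gq uq);
    rewrite /hends -/u -/v Eu Ev setUC.
  - by rewrite -Eu -Ev eqxx in uv.
have [C' pcC'' cC'] :=
  path_cover_add_edge (@residual_sym _) pcC' Ruv (hends_neq x) end_u end_v sep.
by exists C'; rewrite // addn0 cC' addSn cC.
Qed.

Lemma size_le_rho_add_directed_untouched I r :
  symmetric e -> uniq I -> independent hadj I -> is_rho e r ->
  size I <= r + count (directed_untouched I) I.
Proof.
move=> e_sym uI indI rho_r; have [C pcC <-] := residual_cover uI indI.
by rewrite leq_add2r; exact: cover_edges_le_rho rho_r (residual_sub e_sym) pcC.
Qed.

End ResidualGraph.

Section CopySymmetry.
Variables (T : finType) (e : rel T) (K : nat).
Implicit Types y : HV e K.
Local Notation N := (untouched_count (@hadj T e K) (@htouch T e K)).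

Definition hcopy y (c : 'I_K.+2) : HV e K := exist _ ((val y).1, c) (valP y).

Lemma sum_hedge_class y (F : 'I_K.+2 -> nat) :
  \sum_(y' : HV e K | hedge y' == hedge y) F (val y').2 = \sum_(c : 'I_K.+2) F c.
Proof.
rewrite (reindex_onto (hcopy y) (fun y' => (val y').2)) /=; last first.
  by move=> y' /eqP; rewrite /hedge => Ey'; apply: val_inj;
    rewrite /= -Ey' -surjective_pairing.
by apply: eq_bigl => c; rewrite /hedge /= !eqxx.
Qed.

Lemma untouched_count_hedge y y' : hedge y = hedge y' -> N y = N y'.
Proof.
move=> Eyy'; apply: (untouched_count_eq (@htouch_sym T e K) (@htouch_refl T e K)).
  exact: hadj_htouch.
by move=> z; apply: htouch_hedge.
Qed.

Lemma sum_directed_copies y : \sum_(y' : HV e K | hedge y' == hedge y) hdirected y' = 2.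
Proof.
by rewrite (sum_hedge_class y (fun c => (nat_of_ord c < 2) : nat)) !big_ord_recl big1.
Qed.

Lemma sum_undirected_copies y :
  \sum_(y' : HV e K | hedge y' == hedge y) ~~ hdirected y' = K.
Proof.
rewrite (sum_hedge_class y (fun c => (~~ (nat_of_ord c < 2)) : nat)) !big_ord_recl /=.
by rewrite (eq_bigr (fun _ => 1)) ?sum1_card ?card_ord.
Qed.

(* Every edge has 2 directed and K undirected copies, all untouched equally often. *)
Lemma directed_undirected_balance :
  K * \sum_(y : HV e K) hdirected y * N y = 2 * \sum_(y : HV e K) (~~ hdirected y) * N y.
Proof.
rewrite !big_distrr /=.
transitivity (\sum_(y : HV e K) \sum_(y' : HV e K | hedge y' == hedge y)
                hdirected y * (~~ hdirected y') * N y').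
  apply: eq_bigr => y _; rewrite -{1}(sum_undirected_copies y) big_distrl /=.
  by apply: eq_bigr => y' /eqP Ey'; rewrite (untouched_count_hedge Ey'); lia.
rewrite (exchange_big_dep xpredT) //=; apply: eq_bigr => y' _.
rewrite -{1}(sum_directed_copies y') big_distrl /=.
by apply: eq_big => [y | y _]; [rewrite eq_sym | lia].
Qed.

End CopySymmetry.

Section Expectation.
Variables (T : finType) (e : rel T) (K : nat).
Local Notation hadj := (@hadj T e K).
Local Notation htouch := (@htouch T e K).
Local Notation greedy := (greedy_perm hadj).
Local Notation S := (\sum_(s : {perm HV e K}) #|alg2_output s|).
Local Notation N := #|{perm HV e K}|.

Lemma sum_perm_const (n : nat) : \sum_(s : {perm HV e K}) n = N * n.
Proof. by rewrite sum_nat_const. Qed.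

Lemma greedy_perm_independent s : independent hadj (greedy s).
Proof. exact: greedy_mis_independent (@hadj_sym T e K) (@hadj_irr T e K) _. Qed.

Lemma card_alg2_output s : #|alg2_output s| = size (greedy s).
Proof.
rewrite /alg2_output card_in_imset; first exact/card_uniqP/greedy_perm_uniq.
move=> a b aI bI Eab.
have := greedy_perm_independent aI bI.
by rewrite /hadj Eab eqxx /= andbT negbK => /eqP.
Qed.

Lemma sum_output_lower r : symmetric e -> irreflexive e -> is_rho e r -> N * r <= 2 * S.
Proof.
move=> e_sym e_irr rho_r; rewrite -sum_perm_const big_distrr /=; apply: leq_sum => s _.
rewrite card_alg2_output;
  apply: (rho_le_twice_size (I := greedy s) e_sym e_irr _ rho_r) => y yG.
by have := greedy_mis_dominating hadj (mem_perm_enum s y); rewrite (negbTE yG).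
Qed.

Lemma sum_output_upper r : symmetric e -> is_rho e r -> K * S <= (K + 2) * (N * r).
Proof.
move=> e_sym rho_r.
pose D (P : pred (HV e K)) :=
  \sum_(s : {perm HV e K}) count (fun y => P y && untouched htouch (greedy s) y) (greedy s).
have S_le : S <= N * r + D (@hdirected T e K).
  rewrite -sum_perm_const -big_split /=; apply: leq_sum => s _.
  rewrite card_alg2_output.
  exact: size_le_rho_add_directed_untouched e_sym (greedy_perm_uniq _ s)
    (greedy_perm_independent (s:=s)) rho_r.
have D_le : K * D (@hdirected T e K) <= 2 * (N * r).
  rewrite /D !sum_count_untouched directed_undirected_balance -sum_count_untouched.
  rewrite -sum_perm_const leq_mul2l; apply/orP; right; apply: leq_sum => s _.
  apply: leq_trans (count_untouched_le_rho (greedy_perm_uniq _ s) rho_r).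
  by apply: sub_count => y /andP[].
rewrite mulnDl; apply: leq_trans (leq_mul (leqnn K) S_le) _.
by rewrite mulnDr leq_add2l.
Qed.

End Expectation.

Import Order.TTheory GRing.Theory Num.Theory.
Local Open Scope ring_scope.

Lemma ratio_bounds (R : realFieldType) (N S r K : nat) : (0 < N)%N -> (0 < K)%N ->
  (N * r <= 2 * S)%N -> (K * S <= (K + 2) * (N * r))%N ->
  1 / 2 * (r%:R : R) <= S%:R / N%:R /\ S%:R / N%:R <= (1 + 2 / K%:R) * (r%:R : R).
Proof.
rewrite -!(ltr0n R) -!(ler_nat R) !natrM natrD => N_gt0 K_gt0 lower upper.
split; first by rewrite ler_pdivlMr //; lra.
rewrite ler_pdivrMr // -(ler_pM2l K_gt0).
suff -> : K%:R * ((1 + 2 / K%:R) * r%:R * N%:R) = (K%:R + 2) * (N%:R * r%:R) :> R by [].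
by field; rewrite gt_eqF.
Qed.

Theorem lemma4p5 (T : finType) (e : rel T) (K : nat) (r : nat) :
  symmetric e -> irreflexive e -> (0 < K)%N -> is_rho e r ->
  (1 / 2) * (r%:R : rat) <= alg2_expected e K /\
  alg2_expected e K <= (1 + 2 / K%:R) * (r%:R : rat).
Proof.
move=> e_sym e_irr K_gt0 rho_r.
have N_gt0 : (0 < #|{perm HV e K}|)%N by apply/card_gt0P; exists 1%g.
have lower := sum_output_lower K e_sym e_irr rho_r.
have upper := sum_output_upper K e_sym rho_r.
exact: ratio_bounds N_gt0 K_gt0 lower upper.
Qed.
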